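(* Let $T:X\rightrightarrows X^*$ be a pseudomonotone operator. If $\widehat{T}=T^\rho_D$, then $T$ is $D$-maximal pseudomonotone. Moreover, if $\mathrm{dom}(T)$ is convex, the converse holds: if $T$ is $D$-maximal pseudomonotone then $\widehat T=T^\rho_D$.
   Context: $X$ is a real Banach space with dual $X^*$ and pairing $\langle x,x^*\rangle=x^*(x)$. A multivalued operator $T:X\rightrightarrows X^*$ is identified with its graph $T\subset X\times X^*$; $T(x)=\{x^*:(x,x^* )\in T\}$, $\mathrm{dom}(T)=\{x:T(x)\ne\emptyset\}$, $Z_T=\{x:0\in T(x)\}$. For $A\subset X^*$, $\operatorname{cone}(A)=\{tv:t\ge0,v\in A\}$ and $\operatorname{cone}_\circ(A)=\{tv:t>0,v\in A\}$. For $C\subset X$, $N_C(x)=\{x^*: \langle y-x,x^*\rangle\le0\ \forall y\in C\}$. For $(x,x^* ),(y,y^* )\in X\times X^*$, write $(x,x^* )\sim_p(y,y^* )$ if either $\min\{\langle x-y,y^*\rangle,\langle y-x,x^*\rangle\}<0$ or $\langle x-y,y^*\rangle=\langle y-x,x^*\rangle=0$. The pseudomonotone polar is $T^\rho=\{(x,x^* ): (x,x^* )\sim_p(y,y^* )\ \forall (y,y^* )\in T\}$, and $T^\rho_D$ denotes its restriction to $\mathrm{dom}(T)$. $T$ is pseudomonotone if for all $(x,x^* ),(y,y^* )\in T$, $\langle y-x,x^*\rangle\ge0$ implies $\langle y-x,y^*\rangle\ge0$. Two operators $T,S$ are equivalent if $\mathrm{dom}(T)=\mathrm{dom}(S)$,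 $Z_T=Z_S$ and $\operatorname{cone}(T(x))=\operatorname{cone}(S(x))$ for all $x\in\mathrm{dom}(T)\setminus Z_T$. $T$ is $D$-maximal pseudomonotone if $T$ is pseudomonotone and there is a pseudomonotone operator $S$ equivalent to $T$ which has no proper pseudomonotone extension with the same domain. For $x\in Z_T$, $L(T,x)=\{y\in X:\exists y^*\in T(y),\ \langle x-y,y^*\rangle\ge0\}$, and $\widehat T(x)=N_{L(T,x)}(x)$ if $x\in Z_T$, $\widehat T(x)=\operatorname{cone}_\circ(T(x))$ if $x\in\mathrm{dom}(T)\setminus Z_T$, $\widehat T(x)=\emptyset$ if $x\notin\mathrm{dom}(T)$. *)

From Stdlib Require Import Reals.
Open Scope R_scope.
Set Implicit Arguments.

Record Banach := {
  B :> Type;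
  vzero : B;
  vadd : B -> B -> B;
  vopp : B -> B;
  vscal : R -> B -> B;
  vnorm : B -> R;
  vadd_assoc : forall x y z, vadd x (vadd y z) = vadd (vadd x y) z;
  vadd_comm : forall x y, vadd x y = vadd y x;
  vadd_zero : forall x, vadd x vzero = x;
  vadd_opp : forall x, vadd x (vopp x) = vzero;
  vscal_one : forall x, vscal 1 x = x;
  vscal_assoc : forall a b x, vscal a (vscal b x) = vscal (a * b) x;
  vscal_distr_v : forall a x y, vscal a (vadd x y) = vadd (vscal a x) (vscal a y);
  vscal_distr_s : forall a b x, vscal (a + b) x = vadd (vscal a x) (vscal b x);
  vnorm_nonneg : forall x, 0 <= vnorm x;
  vnorm_zero : forall x, vnorm x = 0 <-> x = vzero;
  vnorm_scal : forall a x, vnorm (vscal a x) = Rabs a * vnorm x;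
  vnorm_triangle : forall x y, vnorm (vadd x y) <= vnorm x + vnorm y;
  vcomplete : forall u : nat -> B,
    (forall eps, 0 < eps -> exists N, forall m n, (N <= m)%nat -> (N <= n)%nat ->
        vnorm (vadd (u m) (vopp (u n))) < eps) ->
    exists l, forall eps, 0 < eps -> exists N, forall n, (N <= n)%nat ->
        vnorm (vadd (u n) (vopp l)) < eps
}.

Definition vsub {X : Banach} (x y : X) : X := vadd X x (vopp X y).

Record dual (X : Banach) := {
  dfun :> X -> R;
  dfun_add : forall x y, dfun (vadd X x y) = dfun x + dfun y;
  dfun_scal : forall a x, dfun (vscal X a x) = a * dfun x;
  dfun_bnd : exists M, forall x, Rabs (dfun x) <= M * vnorm X x
}.

Definition pairing {X : Banach} (x : X) (xs : dual X) : R := dfun xs x.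

Definition op (X : Banach) := X -> dual X -> Prop.

Definition dom (X : Banach) (T : op X) (x : X) : Prop := exists xs, T x xs.

Definition is_zero_dual (X : Banach) (xs : dual X) : Prop := forall y, dfun xs y = 0.

Definition zeros (X : Banach) (T : op X) (x : X) : Prop :=
  exists z, T x z /\ is_zero_dual z.

Definition cone (X : Banach) (A : dual X -> Prop) (w : dual X) : Prop :=
  exists t v, 0 <= t /\ A v /\ forall y, dfun w y = t * dfun v y.
Definition cone_o (X : Banach) (A : dual X -> Prop) (w : dual X) : Prop :=
  exists t v, 0 < t /\ A v /\ forall y, dfun w y = t * dfun v y.

Definition normal_cone (X : Banach) (C : X -> Prop) (x : X) (xs : dual X) : Prop :=
  forall y, C y -> pairing (vsub y x) xs <= 0.

Definition sim_p (X : Banach) (x : X) (xs : dual X) (y : X) (ys : dual X) : Prop :=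
  Rmin (pairing (vsub x y) ys) (pairing (vsub y x) xs) < 0 \/
  (pairing (vsub x y) ys = 0 /\ pairing (vsub y x) xs = 0).

Definition polar (X : Banach) (T : op X) : op X :=
  fun x xs => forall y ys, T y ys -> sim_p x xs y ys.
Definition polarD (X : Banach) (T : op X) : op X :=
  fun x xs => dom T x /\ polar T x xs.

Definition pseudomonotone (X : Banach) (T : op X) : Prop :=
  forall x xs y ys, T x xs -> T y ys ->
    pairing (vsub y x) xs >= 0 -> pairing (vsub y x) ys >= 0.

Definition op_equivalent (X : Banach) (T S : op X) : Prop :=
  (forall x, dom T x <-> dom S x) /\
  (forall x, zeros T x <-> zeros S x) /\
  (forall x, dom T x -> ~ zeros T x -> forall w, cone (T x) w <-> cone (S x) w).

Definition no_proper_pm_extension_same_dom (X : Banach) (S : op X) : Prop :=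
  forall S' : op X, pseudomonotone S' ->
    (forall x xs, S x xs -> S' x xs) ->
    (forall x, dom S' x <-> dom S x) ->
    forall x xs, S' x xs -> S x xs.

Definition D_maximal_pm (X : Banach) (T : op X) : Prop :=
  pseudomonotone T /\
  exists S : op X, pseudomonotone S /\ op_equivalent T S /\
                   no_proper_pm_extension_same_dom S.

Definition Lset (X : Banach) (T : op X) (x : X) (y : X) : Prop :=
  exists ys, T y ys /\ pairing (vsub x y) ys >= 0.

Definition That (X : Banach) (T : op X) : op X :=
  fun x xs =>
    (zeros T x /\ normal_cone (Lset T x) x xs) \/
    (dom T x /\ ~ zeros T x /\ cone_o (T x) xs).

Definition op_eq (X : Banach) (T S : op X) : Prop :=
  forall x xs, T x xs <-> S x xs.

Definition convex_set {X : Banach} (C : X -> Prop) : Prop :=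
  forall x y t, C x -> C y -> 0 <= t <= 1 ->
    C (vadd X (vscal X t x) (vscal X (1 - t) y)).

(* [T^] is pseudomonotone, equivalent to [T], and contained in [T^rho_D]; since every
   pseudomonotone extension of [T^] lies in [T^rho_D], the equality [T^ = T^rho_D] makes
   [T^] maximal with respect to its domain.  Conversely, let [S] be a maximal operator
   equivalent to [T] and [(x, x* )] in [T^rho_D].  Then [(x, x* ) ~p (y, y* )] for every
   [(y, y* )] in [S]: off [Z_T] because [y*] is a positive multiple of an element of [T(y)];
   on [Z_T] by testing [S] at the midpoint of [x] and [y], which lies in [dom T] by
   convexity.  Hence [S] plus [(x, x* )] is pseudomonotone, so [(x, x* )] is in [S] by
   maximality, and [x*] lies in the cone of [T(x)]. *)
From Stdlib Require Import Reals Lra Classical.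
Open Scope R_scope.
Set Implicit Arguments.
Unset Strict Implicit.

Section Pairing.
Variable X : Banach.
Implicit Types (x y : X) (f xs ys : dual X) (S T : op X).

Lemma dfun_zero f : f (vzero X) = 0.
Proof.
  pose proof (dfun_add f (vzero X) (vzero X)) as H.
  rewrite vadd_zero in H; lra.
Qed.

Lemma dfun_opp f x : f (vopp X x) = - f x.
Proof.
  pose proof (dfun_add f x (vopp X x)) as H.
  rewrite vadd_opp, dfun_zero in H; lra.
Qed.

Lemma pairing_sub f x y : pairing (vsub x y) f = f x - f y.
Proof. unfold pairing, vsub; rewrite dfun_add, dfun_opp; ring. Qed.

Lemma dfun_convex f x y t :
  f (vadd X (vscal X t x) (vscal X (1 - t) y)) = t * f x + (1 - t) * f y.
Proof. rewrite dfun_add, !dfun_scal; reflexivity. Qed.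

Lemma sim_pE x xs y ys :
  sim_p x xs y ys <->
  ys x - ys y < 0 \/ xs y - xs x < 0 \/ (ys x - ys y = 0 /\ xs y - xs x = 0).
Proof.
  unfold sim_p; rewrite !pairing_sub; unfold Rmin.
  destruct (Rle_dec (ys x - ys y) (xs y - xs x)); split; intro H; lra.
Qed.

Lemma sim_p_refl x xs : sim_p x xs x xs.
Proof. apply sim_pE; lra. Qed.

Lemma sim_p_sym x xs y ys : sim_p x xs y ys -> sim_p y ys x xs.
Proof. rewrite !sim_pE; lra. Qed.

Lemma sim_p_scale_r x xs y (v : dual X) ys t :
  0 < t -> (forall u, ys u = t * v u) -> sim_p x xs y v -> sim_p x xs y ys.
Proof.
  intros Ht Hys; rewrite !sim_pE, !Hys.
  intros [H | [H | H]]; [left; nra | right; left; lra | right; right; split; nra].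
Qed.

Lemma pseudomonotone_sim_p S :
  pseudomonotone S <-> forall x xs y ys, S x xs -> S y ys -> sim_p x xs y ys.
Proof.
  split.
  - intros hS x xs y ys Hx Hy; apply sim_pE.
    pose proof (hS x xs y ys Hx Hy) as Hxy; pose proof (hS y ys x xs Hy Hx) as Hyx.
    rewrite !pairing_sub in Hxy, Hyx.
    destruct (Rlt_dec (ys x - ys y) 0); [lra|].
    destruct (Rlt_dec (xs y - xs x) 0); [lra|].
    assert (ys y - ys x >= 0) by (apply Hxy; lra).
    assert (xs x - xs y >= 0) by (apply Hyx; lra).
    lra.
  - intros H x xs y ys Hx Hy; rewrite !pairing_sub.
    pose proof (H x xs y ys Hx Hy) as Hsim; rewrite sim_pE in Hsim; lra.
Qed.

Lemma pseudomonotone_sub_polar S T x xs :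
  pseudomonotone S -> (forall y ys, T y ys -> S y ys) -> S x xs -> polar T x xs.
Proof.
  intros hS HTS Hx y ys Hy.
  apply (proj1 (pseudomonotone_sim_p S) hS); auto.
Qed.

Lemma cone_self (A : dual X -> Prop) v : A v -> cone A v.
Proof. intro Hv; exists 1, v; repeat split; auto; [lra | intro; ring]. Qed.

Lemma cone_o_self (A : dual X -> Prop) v : A v -> cone_o A v.
Proof. intro Hv; exists 1, v; repeat split; auto; [lra | intro; ring]. Qed.

End Pairing.

Section Hat.
Variables (X : Banach) (T : op X).
Hypothesis hT : pseudomonotone T.
Implicit Types (x y : X) (xs ys : dual X).

Lemma T_sub_That x xs : T x xs -> That T x xs.
Proof.
  intro Hx; destruct (classic (zeros T x)) as [Hz | Hz].
  - left; split; auto.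
    intros y [ys [Hy Hyx]]; rewrite pairing_sub in *.
    pose proof (hT Hy Hx) as H; rewrite !pairing_sub in H; lra.
  - right; repeat split; [exists xs; auto | auto | apply cone_o_self; auto].
Qed.

Lemma That_Lset x xs y : That T x xs -> pairing (vsub y x) xs >= 0 -> Lset T y x.
Proof.
  rewrite pairing_sub.
  intros [[[z [Hz Hz0]] _] | [_ [_ [t [u [Ht [Hu Hxs]]]]]]] Hxy.
  - exists z; split; auto; rewrite pairing_sub, !Hz0; lra.
  - exists u; split; auto; rewrite pairing_sub; rewrite !Hxs in Hxy; nra.
Qed.

Lemma That_pairing_of_Lset y ys x :
  That T y ys -> Lset T y x -> pairing (vsub y x) ys >= 0.
Proof.
  intros [[_ HN] | [_ [_ [t [v [Ht [Hv Hys]]]]]]] HL.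
  - specialize (HN x HL); rewrite !pairing_sub in *; lra.
  - destruct HL as [u [Hu Hxu]].
    pose proof (hT Hu Hv Hxu) as H; rewrite !pairing_sub, !Hys in *; nra.
Qed.

Lemma That_pm : pseudomonotone (That T).
Proof.
  intros x xs y ys Hx Hy Hxy.
  exact (That_pairing_of_Lset Hy (That_Lset Hx Hxy)).
Qed.

Lemma That_dom x : dom (That T) x <-> dom T x.
Proof.
  split.
  - intros [xs [[[z [Hz _]] _] | [Hd _]]]; [exists z|]; auto.
  - intros [xs Hx]; exists xs; apply T_sub_That; auto.
Qed.

Lemma That_zeros x : zeros (That T) x <-> zeros T x.
Proof.
  split.
  - intros [z [[[Hz _] | [_ [Hnz [t [v [Ht [Hv Hzv]]]]]]] Hz0]]; auto.
    exfalso; apply Hnz; exists v; split; auto.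
    intro y; specialize (Hz0 y); rewrite Hzv in Hz0; nra.
  - intros [z [Hz Hz0]]; exists z; split; auto; apply T_sub_That; auto.
Qed.

Lemma That_equiv : op_equivalent T (That T).
Proof.
  split; [intro x; rewrite That_dom; tauto|].
  split; [intro x; rewrite That_zeros; tauto|].
  intros x Hd Hnz w; split.
  - intros [t [v [Ht [Hv Hw]]]]; exists t, v; repeat split; auto.
    right; repeat split; auto; apply cone_o_self; auto.
  - intros [t [u [Ht [[[Hz _] | [_ [_ [s [v [Hs [Hv Hu]]]]]]] Hw]]]]; [contradiction|].
    exists (t * s), v; repeat split; auto; [nra | intro y; rewrite Hw, Hu; ring].
Qed.

Lemma That_sub_polarD x xs : That T x xs -> polarD T x xs.
Proof.
  intro Hx; split.
  - apply That_dom; exists xs; auto.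
  - eapply pseudomonotone_sub_polar; [exact That_pm | exact T_sub_That | exact Hx].
Qed.

Lemma That_no_proper_extension_of_eq :
  op_eq (That T) (polarD T) -> no_proper_pm_extension_same_dom (That T).
Proof.
  intros Heq S hS HS Hdom x xs Hx; apply Heq; split.
  - apply That_dom, Hdom; exists xs; auto.
  - eapply pseudomonotone_sub_polar; [exact hS | | exact Hx].
    intros y ys Hy; apply HS, T_sub_That; auto.
Qed.

End Hat.

Section Maximal.
Variables (X : Banach) (T S : op X).
Hypotheses (hT : pseudomonotone T) (hS : pseudomonotone S) (HTS : op_equivalent T S).
Implicit Types (x y : X) (xs ys : dual X).

Lemma equiv_cone_o y ys : dom T y -> ~ zeros T y -> S y ys -> cone_o (T y) ys.
Proof.
  intros Hd Hnz Hy; destruct HTS as [_ [HZ HC]].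
  destruct (proj2 (HC y Hd Hnz ys) (cone_self Hy)) as [t [v [Ht [Hv Hys]]]].
  destruct (Req_dec t 0) as [-> | Ht0].
  - exfalso; apply Hnz, HZ; exists ys; split; auto.
    intro u; rewrite Hys; ring.
  - exists t, v; repeat split; auto; lra.
Qed.

Lemma polar_sim_p_off_zeros x xs y ys :
  polar T x xs -> S y ys -> ~ zeros T y -> sim_p x xs y ys.
Proof.
  intros Hpol Hy Hnz.
  assert (Hd : dom T y) by (apply (proj1 HTS); exists ys; auto).
  destruct (equiv_cone_o Hd Hnz Hy) as [t [v [Ht [Hv Hys]]]].
  exact (sim_p_scale_r Ht Hys (Hpol y v Hv)).
Qed.

(* If [y* ] separated [x] from [y] strictly, the test pair of [S] at the midpoint [z] of
   [x] and [y] would be flat along [y - z] while [y* ] strictly decreases along it. *)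
Lemma polarD_sim_p_on_zeros x xs y ys :
  convex_set (dom T) -> polarD T x xs -> zeros T y -> S y ys -> sim_p x xs y ys.
Proof.
  intros Hconv [Hdx Hpol] [z0 [Hz0 Hz0zero]] Hy; apply sim_pE, NNPP; intro Hn.
  assert (Hxs : xs y - xs x = 0).
  { pose proof (Hpol y z0 Hz0) as H; rewrite sim_pE, !Hz0zero in H.
    destruct (Rtotal_order (xs y - xs x) 0) as [? | [? | ?]]; [tauto | auto | lra]. }
  assert (Hys : ys x - ys y > 0).
  { destruct (Rtotal_order (ys x - ys y) 0) as [? | [? | ?]]; [tauto | tauto | auto]. }
  set (z := vadd X (vscal X (/2) x) (vscal X (1 - /2) y)).
  assert (Hmid : forall f : dual X, f z = /2 * f x + (1 - /2) * f y)
    by (intro; apply dfun_convex).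
  assert (Hdz : dom T z) by (apply Hconv; [auto | exists z0; auto | lra]).
  assert (Hflat : exists w, S z w /\ w y - w z >= 0).
  { destruct (classic (zeros T z)) as [Hzz | Hnzz].
    - destruct (proj1 (proj1 (proj2 HTS) z) Hzz) as [w [Hw Hw0]].
      exists w; split; auto; rewrite !Hw0; lra.
    - destruct (proj1 (proj1 HTS z) Hdz) as [w Hw].
      destruct (equiv_cone_o Hdz Hnzz Hw) as [t [v [Ht [Hv Hwv]]]].
      assert (Hvxy : v z - v y >= 0).
      { pose proof (hT Hz0 Hv) as H; rewrite !pairing_sub, !Hz0zero in H.
        apply H; lra. }
      assert (Hvz : v y - v z = 0).
      { pose proof (Hpol z v Hv) as Hsim; rewrite sim_pE in Hsim.
        rewrite (Hmid v) in Hvxy, Hsim |- *; rewrite (Hmid xs) in Hsim; lra. }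
      exists w; split; auto; rewrite !Hwv.
      replace (t * v y - t * v z) with (t * (v y - v z)) by ring; rewrite Hvz; lra. }
  destruct Hflat as [w [Hw Hwyz]].
  pose proof (hS Hw Hy) as H; rewrite !pairing_sub in H.
  specialize (H Hwyz); rewrite Hmid in H; lra.
Qed.

Definition add_pair (R : op X) x xs : op X := fun a a1 => R a a1 \/ (a = x /\ a1 = xs).

Lemma pseudomonotone_add_pair (R : op X) x xs :
  pseudomonotone R -> (forall y ys, R y ys -> sim_p x xs y ys) ->
  pseudomonotone (add_pair R x xs).
Proof.
  intros hR Hsim; apply pseudomonotone_sim_p.
  intros a a1 b b1 [Ha | [-> ->]] [Hb | [-> ->]].
  - apply (proj1 (pseudomonotone_sim_p R) hR); auto.
  - apply sim_p_sym, Hsim; auto.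
  - apply Hsim; auto.
  - apply sim_p_refl.
Qed.

Lemma polarD_sub_That x xs :
  convex_set (dom T) -> no_proper_pm_extension_same_dom S ->
  polarD T x xs -> That T x xs.
Proof.
  intros Hconv Hmax [Hdx Hpol].
  destruct (classic (zeros T x)) as [Hzx | Hnzx].
  - left; split; auto.
    intros y [ys [Hy Hyx]]; specialize (Hpol y ys Hy).
    rewrite sim_pE in Hpol; rewrite pairing_sub in *; lra.
  - right; repeat split; auto.
    assert (Hsim : forall y ys, S y ys -> sim_p x xs y ys).
    { intros y ys Hy; destruct (classic (zeros T y)).
      - apply polarD_sim_p_on_zeros; auto; split; auto.
      - apply polar_sim_p_off_zeros; auto. }
    assert (Hdom : forall a, dom (add_pair S x xs) a <-> dom S a).
    { intro a; split.
      - intros [a1 [Ha | [-> ->]]]; [exists a1; auto | apply (proj1 HTS); auto].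
      - intros [a1 Ha]; exists a1; left; auto. }
    assert (Hx : S x xs).
    { apply (Hmax _ (pseudomonotone_add_pair hS Hsim)); auto.
      - intros; left; auto.
      - right; auto. }
    exact (equiv_cone_o Hdx Hnzx Hx).
Qed.

End Maximal.

Unset Implicit Arguments.
Set Strict Implicit.

Theorem mainTheorem15 (X : Banach) (T : op X) (hT : pseudomonotone T) :
  (op_eq (That T) (polarD T) -> D_maximal_pm T) /\
  (convex_set (dom T) -> D_maximal_pm T -> op_eq (That T) (polarD T)).
Proof.
  split.
  - intro Heq; split; auto.
    exists (That T); split; [|split].
    + apply That_pm; auto.
    + apply That_equiv; auto.
    + apply That_no_proper_extension_of_eq; auto.
  - intros Hconv [_ [S [hS [HTS Hmax]]]] x xs; split.
    + apply That_sub_polarD; auto.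
    + apply (polarD_sub_That hT hS HTS); auto.
Qed.
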